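(* Let $h$ be a real analytic function with $h(r)>0$ for $r>0$ and $h^2(r)=r^2\varphi(r)$ with $\varphi$ real analytic and $\varphi(0)=1$. There are no solutions $v$ of $\ddot v=\frac{2}{h^2}(e^v-1)$ on $[0,\infty)$ with $v(0)=\dot v(0)=0$ and $\lim_{r\to\infty}r^{-k}e^{v(r)}=0$ for some $k\in\mathbb{Z}$, such that $\ddot v(0)=b>0$.
   Context: Dots denote derivatives with respect to $r$. *)

From Stdlib Require Import Reals.
From Coquelicot Require Import Coquelicot.
Open Scope R_scope.

Definition analytic_at (f : R -> R) (x : R) : Prop :=
  exists (a : nat -> R) (d : R), 0 < d /\
    forall y, Rabs (y - x) < d -> is_series (fun n => a n * (y - x) ^ n) (f y).

(* f is real analytic on [0, oo) (at 0 this means f extends analytically). *)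
Definition analytic_on_nonneg (f : R -> R) : Prop :=
  forall x, 0 <= x -> analytic_at f x.

Definition deriv_on_nonneg (f f' : R -> R) : Prop :=
  forall x, 0 <= x ->
    filterlim (fun y => (f y - f x) / (y - x))
      (within (fun y => 0 <= y /\ y <> x) (locally x)) (locally (f' x)).

From Stdlib Require Import Reals Lra ZArith.
From Coquelicot Require Import Coquelicot.
Open Scope R_scope.

(* Since v(0) = v'(0) = 0 and v''(0) = b > 0, the solution is positive with
   positive slope at some t0 > 0.  Wherever v > 0 the equation gives v'' > 0, so
   v lies above its tangent at t0; a continuity argument shows that v never
   returns to 0, hence v(r) >= c r for large r with c > 0.  Then e^v beats every
   power of r, and r^(-k) e^v cannot tend to 0. *)

Lemma deriv_on_nonneg_quotient (f f' : R -> R) x eps :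
  deriv_on_nonneg f f' -> 0 <= x -> 0 < eps ->
  exists d, 0 < d /\ forall y, 0 <= y -> y <> x -> Rabs (y - x) < d ->
    Rabs ((f y - f x) / (y - x) - f' x) < eps.
Proof.
intros Hf hx he.
destruct (Hf x hx _ (locally_ball (f' x) (mkposreal eps he))) as [d Hd].
exists d; split; [apply cond_pos|].
intros y hy hyx hd; apply (Hd y hd); split; assumption.
Qed.

Lemma deriv_on_nonneg_lower_bound_at_0 (f f' : R -> R) eps :
  deriv_on_nonneg f f' -> 0 < eps ->
  exists d, 0 < d /\ forall y, 0 < y < d -> (f' 0 - eps) * y < f y - f 0.
Proof.
intros Hf he.
destruct (deriv_on_nonneg_quotient f f' 0 eps Hf (Rle_refl 0) he) as [d [hd Hd]].
exists d; split; [exact hd|]; intros y hy.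
specialize (Hd y ltac:(lra) ltac:(lra) ltac:(rewrite Rminus_0_r, Rabs_pos_eq; lra)).
rewrite Rminus_0_r in Hd; apply Rabs_def2 in Hd.
replace (f y - f 0) with ((f y - f 0) / y * y) by (field; lra); nra.
Qed.

Lemma deriv_on_nonneg_derivable_pt_lim (f f' : R -> R) x :
  deriv_on_nonneg f f' -> 0 < x -> derivable_pt_lim f x (f' x).
Proof.
intros Hf hx e he.
destruct (deriv_on_nonneg_quotient f f' x e Hf (Rlt_le _ _ hx) he) as [d [hd Hd]].
exists (mkposreal (Rmin d x) (Rmin_pos _ _ hd hx)); simpl; intros k hk0 hk.
assert (Hdx := Rmin_l d x); assert (Hxx := Rmin_r d x).
apply Rabs_def2 in hk.
specialize (Hd (x + k)); replace (x + k - x) with k in Hd by ring.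
apply Hd; [lra | intro E; apply hk0; lra | apply Rabs_def1; lra].
Qed.

Lemma continuity_pt_pos_near (f : R -> R) x :
  continuity_pt f x -> 0 < f x ->
  exists d, 0 < d /\ forall y, Rabs (y - x) < d -> 0 < f y.
Proof.
intros Hc hfx.
destruct (Hc (f x) hfx) as [d [hd Hd]]; exists d; split; [exact hd|].
intros y hy; destruct (Req_dec y x) as [->|hne]; [exact hfx|].
assert (Hy : Rabs (f y - f x) < f x) by (apply Hd; split; [split; [exact I|auto]|exact hy]).
apply Rabs_def2 in Hy; lra.
Qed.

Lemma first_nonpos (f : R -> R) t0 r :
  t0 <= r -> (forall x, t0 <= x <= r -> continuity_pt f x) ->
  0 < f t0 -> f r <= 0 ->
  exists m, t0 < m <= r /\ f m <= 0 /\ forall s, t0 <= s < m -> 0 < f s.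
Proof.
intros htr Hc hf0 hfr.
set (E := fun x => t0 <= x <= r /\ forall s, t0 <= s <= x -> 0 < f s).
assert (Et0 : E t0).
{ split; [lra|]; intros s hs; replace s with t0 by lra; exact hf0. }
destruct (completeness E) as [m [Hub Hleast]].
{ exists r; intros x [[_ hx] _]; exact hx. }
{ exists t0; exact Et0. }
assert (hm0 := Hub t0 Et0).
assert (hmr : m <= r) by (apply Hleast; intros x [[_ hx] _]; exact hx).
assert (below : forall s, t0 <= s < m -> 0 < f s).
{ intros s hs; destruct (Rlt_or_le 0 (f s)) as [pos|nonpos]; [exact pos|].
  enough (m <= s) by lra.
  apply Hleast; intros x [_ Hx]; destruct (Rle_or_lt x s); [assumption|].
  specialize (Hx s ltac:(lra)); lra. }
assert (at_m : f m <= 0).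
{ destruct (Rle_or_lt (f m) 0) as [nonpos|pos]; [exact nonpos|exfalso].
  assert (hmr' : m < r) by (destruct (Req_dec m r) as [<-|]; lra).
  destruct (continuity_pt_pos_near f m (Hc m ltac:(lra)) pos) as [d [hd Hd]].
  assert (hx1 := Rmin_l (m + d / 2) r); assert (hx2 := Rmin_r (m + d / 2) r).
  set (x := Rmin (m + d / 2) r) in *.
  assert (hmx : m < x) by (apply Rmin_glb_lt; lra).
  enough (E x) by (specialize (Hub x ltac:(assumption)); lra).
  split; [lra|]; intros s hs.
  destruct (Rlt_or_le s m); [apply below; lra|].
  apply Hd; rewrite Rabs_pos_eq; lra. }
exists m; split; [split; [destruct (Req_dec m t0) as [->|]; lra|exact hmr]|].
split; assumption.
Qed.

Lemma exp_mult_INR n x : exp (INR n * x) = exp x ^ n.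
Proof.
induction n as [|n IH]; [simpl; rewrite Rmult_0_l; apply exp_0|].
rewrite S_INR, Rmult_plus_distr_r, Rmult_1_l, exp_plus, IH; simpl; ring.
Qed.

(* With y = c r / (2 (n+1)), [exp y >= y] gives exp (2 y) >= y^2 >= r once
   r >= 4 (n+1)^2 / c^2; raise this to the power n+1. *)
Lemma pow_le_exp_mul n c :
  0 < c -> exists R0, forall r, R0 <= r -> r ^ n <= exp (c * r).
Proof.
intros hc; set (N := INR (S n)).
assert (hN : 0 < N) by apply lt_0_INR, Nat.lt_0_succ.
set (q := 4 * N ^ 2 / c ^ 2).
assert (hq : 0 < q) by (apply Rdiv_lt_0_compat; nra).
exists (q + 1); intros r hr.
set (y := c * r / (2 * N)).
assert (hy : 0 <= y) by (apply Rle_mult_inv_pos; nra).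
assert (hry : r <= y ^ 2).
{ replace (y ^ 2) with (r * (r / q)) by (unfold y, q; field; lra).
  assert (1 <= r / q).
  { apply (Rmult_le_reg_r q); [exact hq|].
    unfold Rdiv; rewrite Rmult_assoc, Rinv_l; lra. }
  nra. }
assert (hexp : y ^ 2 <= exp y ^ 2).
{ apply pow_incr; split; [exact hy|]; assert (Hy := exp_ineq1_le y); lra. }
replace (c * r) with (INR (2 * S n) * y)
  by (unfold y; rewrite mult_INR; fold N; simpl (INR 2); field; lra).
rewrite exp_mult_INR, pow_mult.
apply Rle_trans with (r ^ S n).
- simpl; assert (0 <= r ^ n) by (apply pow_le; lra); nra.
- apply pow_incr; lra.
Qed.

Lemma inv_pow_abs_le_powerRZ r m : 1 <= r -> / r ^ Z.abs_nat m <= powerRZ r m.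
Proof.
intros hr.
assert (hpow : forall n, 1 <= r ^ n) by (intro n; apply pow_R1_Rle; exact hr).
destruct m as [|p|p]; simpl.
- rewrite Rinv_1; lra.
- assert (hp := hpow (Pos.to_nat p)).
  apply Rle_trans with 1; [|exact hp].
  rewrite <- Rinv_1; apply Rinv_le_contravar; lra.
- apply Rle_refl.
Qed.

Lemma is_lim_0_not_eventually_ge_1 (f : R -> R) :
  is_lim f p_infty 0 -> ~ exists R0, forall r, R0 <= r -> 1 <= f r.
Proof.
intros Hf [R0 HR0].
destruct (Hf _ (locally_ball 0 (mkposreal 1 Rlt_0_1))) as [M HM].
set (r := Rmax M R0 + 1).
assert (hM := Rmax_l M R0); assert (hR := Rmax_r M R0).
specialize (HM r ltac:(unfold r; lra)); specialize (HR0 r ltac:(unfold r; lra)).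
change (Rabs (f r - 0) < 1) in HM; apply Rabs_def2 in HM; lra.
Qed.

Section ConvexSolution.

Variables v v1 v2 : R -> R.
Hypothesis Hv : deriv_on_nonneg v v1.
Hypothesis Hv1 : deriv_on_nonneg v1 v2.
Hypothesis v2_pos : forall r, 0 < r -> 0 < v r -> 0 < v2 r.

Let Dv x : 0 < x -> derivable_pt_lim v x (v1 x).
Proof. now apply deriv_on_nonneg_derivable_pt_lim. Qed.

Let Dv1 x : 0 < x -> derivable_pt_lim v1 x (v2 x).
Proof. now apply deriv_on_nonneg_derivable_pt_lim. Qed.

Lemma exists_pos_with_pos_slope :
  v 0 = 0 -> v1 0 = 0 -> 0 < v2 0 -> exists t0, 0 < t0 /\ 0 < v t0 /\ 0 < v1 t0.
Proof.
intros v0 v10 hb.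
destruct (deriv_on_nonneg_lower_bound_at_0 v1 v2 (v2 0 / 2) Hv1 ltac:(lra))
  as [d1 [hd1 Hd1]].
assert (v1_pos : forall y, 0 < y < d1 -> 0 < v1 y).
{ intros y hy; specialize (Hd1 y hy); rewrite v10 in Hd1; nra. }
destruct (deriv_on_nonneg_lower_bound_at_0 v v1 1 Hv ltac:(lra)) as [d0 [hd0 Hd0]].
assert (v_gt : forall y, 0 < y < d0 -> - y < v y).
{ intros y hy; specialize (Hd0 y hy); rewrite v0, v10 in Hd0; lra. }
assert (v_incr : forall s t, 0 < s -> s < t -> t < d1 -> v s < v t).
{ intros s t hs hst ht.
  destruct (MVT_cor2 v v1 s t hst) as [xi [E hxi]]; [intros; apply Dv; lra|].
  assert (0 < v1 xi) by (apply v1_pos; lra); nra. }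
assert (v_nonneg : 0 <= v (d1 / 4)).
{ apply Rle_plus_epsilon; intros eps heps.
  assert (hs1 := Rmin_l eps (Rmin (d1 / 8) (d0 / 2))).
  assert (hs2 := Rmin_r eps (Rmin (d1 / 8) (d0 / 2))).
  assert (hs3 := Rmin_l (d1 / 8) (d0 / 2)); assert (hs4 := Rmin_r (d1 / 8) (d0 / 2)).
  set (s := Rmin eps (Rmin (d1 / 8) (d0 / 2))) in *.
  assert (hs : 0 < s) by (repeat apply Rmin_pos; lra).
  pose proof (v_incr s (d1 / 4) hs ltac:(lra) ltac:(lra)).
  pose proof (v_gt s ltac:(lra)); lra. }
exists (d1 / 2); split; [lra|]; split.
- pose proof (v_incr (d1 / 4) (d1 / 2) ltac:(lra) ltac:(lra) ltac:(lra)); lra.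
- apply v1_pos; lra.
Qed.

Lemma tangent_le t0 r :
  0 < t0 < r -> (forall s, t0 <= s < r -> 0 < v s) -> v t0 + v1 t0 * (r - t0) <= v r.
Proof.
intros htr Hpos.
destruct (MVT_cor2 v v1 t0 r ltac:(lra)) as [xi [E1 hxi]]; [intros; apply Dv; lra|].
destruct (MVT_cor2 v1 v2 t0 xi ltac:(lra)) as [z [E2 hz]]; [intros; apply Dv1; lra|].
assert (0 < v2 z) by (apply v2_pos; [|apply Hpos]; lra).
assert (v1 t0 < v1 xi) by nra; nra.
Qed.

Lemma stays_positive t0 :
  0 < t0 -> 0 < v t0 -> 0 <= v1 t0 -> forall r, t0 <= r -> 0 < v r.
Proof.
intros ht0 hv0 hv10 r hr; destruct (Rlt_or_le 0 (v r)) as [pos|nonpos]; [exact pos|].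
destruct (first_nonpos v t0 r hr) as [m [hm [hvm Hbelow]]]; try assumption.
{ intros x hx; apply derivable_continuous_pt; exists (v1 x); apply Dv; lra. }
pose proof (tangent_le t0 m ltac:(lra) Hbelow); nra.
Qed.

Lemma eventually_linear_growth :
  v 0 = 0 -> v1 0 = 0 -> 0 < v2 0 ->
  exists c R0, 0 < c /\ forall r, R0 <= r -> c * r <= v r.
Proof.
intros v0 v10 hb.
destruct (exists_pos_with_pos_slope v0 v10 hb) as [t0 [ht0 [hv hv1]]].
exists (v1 t0 / 2), (2 * t0); split; [lra|]; intros r hr.
assert (hpos : forall s, t0 <= s < r -> 0 < v s)
  by (intros s hs; apply (stays_positive t0); lra).
pose proof (tangent_le t0 r ltac:(lra) hpos); nra.
Qed.

Lemma powerRZ_mul_exp_eventually_ge_1 (m : Z) :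
  v 0 = 0 -> v1 0 = 0 -> 0 < v2 0 ->
  exists R0, forall r, R0 <= r -> 1 <= powerRZ r m * exp (v r).
Proof.
intros v0 v10 hb.
destruct (eventually_linear_growth v0 v10 hb) as [c [R1 [hc Hlin]]].
destruct (pow_le_exp_mul (Z.abs_nat m) c hc) as [R2 Hexp].
exists (Rmax 1 (Rmax R1 R2)); intros r hr.
assert (h1 := Rmax_l 1 (Rmax R1 R2)); assert (h2 := Rmax_r 1 (Rmax R1 R2)).
assert (h3 := Rmax_l R1 R2); assert (h4 := Rmax_r R1 R2).
set (n := Z.abs_nat m) in *.
assert (hrn : 0 < r ^ n) by (apply pow_lt; lra).
assert (hev : r ^ n <= exp (v r)).
{ apply Rle_trans with (exp (c * r)); [apply Hexp; lra|].
  destruct (Rle_lt_or_eq_dec _ _ (Hlin r ltac:(lra))) as [hlt| ->];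
    [apply Rlt_le, exp_increasing, hlt|apply Rle_refl]. }
apply Rle_trans with (/ r ^ n * r ^ n); [rewrite Rinv_l; lra|].
apply Rmult_le_compat; [apply Rlt_le, Rinv_0_lt_compat; exact hrn|lra| |exact hev].
apply inv_pow_abs_le_powerRZ; lra.
Qed.

End ConvexSolution.

Theorem mainTheorem14 (h phi : R -> R)
  (Hh_an : analytic_on_nonneg h)
  (Hphi_an : analytic_on_nonneg phi)
  (Hh_pos : forall r, 0 < r -> 0 < h r)
  (Hh_phi : forall r, 0 <= r -> (h r) ^ 2 = r ^ 2 * phi r)
  (Hphi0 : phi 0 = 1)
  (b : R) (Hb : 0 < b) :
  ~ exists (v v1 v2 : R -> R),
      deriv_on_nonneg v v1 /\ deriv_on_nonneg v1 v2 /\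
      (forall r, 0 < r -> v2 r = 2 / (h r) ^ 2 * (exp (v r) - 1)) /\
      v 0 = 0 /\ v1 0 = 0 /\
      (exists k : Z, is_lim (fun r => powerRZ r (- k) * exp (v r)) p_infty 0) /\
      v2 0 = b.
Proof.
intros [v [v1 [v2 [Hv [Hv1 [Hode [v0 [v10 [[k Hlim] v20]]]]]]]]].
assert (v2_pos : forall r, 0 < r -> 0 < v r -> 0 < v2 r).
{ intros r hr hvr; rewrite Hode by exact hr.
  assert (hexp : 1 < exp (v r)) by (rewrite <- exp_0; apply exp_increasing, hvr).
  apply Rmult_lt_0_compat; [|lra].
  apply Rdiv_lt_0_compat; [lra|apply pow_lt, Hh_pos, hr]. }
apply (is_lim_0_not_eventually_ge_1 _ Hlim).
apply (powerRZ_mul_exp_eventually_ge_1 v v1 v2 Hv Hv1 v2_pos); lra.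
Qed.
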